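(* Let $(M^4,g)$ be an oriented Einstein $4$-manifold whose sectional curvature is semi-definite (i.e. either $\sec_g\ge 0$ everywhere or $\sec_g\le 0$ everywhere). Then at every point of $M$ \[ \frac{|s_g|}{\sqrt{6}}\geq |W^+|+|W^-|. \] *)

(* Pointwise (algebraic) model of an oriented Riemannian
   4-manifold: at each point p : M the Riemann tensor is given by its
   components in an oriented orthonormal frame (e_0,e_1,e_2,e_3) of T_pM,
   so the metric is the standard dot product on R^4 and the orientation is
   e_0/\e_1/\e_2/\e_3. *)
From HB Require Import structures.
From mathcomp Require Import all_boot all_order all_algebra.
Set Implicit Arguments. Unset Strict Implicit. Unset Printing Implicit Defensive.
Import Order.TTheory GRing.Theory Num.Theory.
Local Open Scope ring_scope.

Section Curvature4.
Variable R : rcfType.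

Definition tensor4 := 'I_4 -> 'I_4 -> 'I_4 -> 'I_4 -> R.
Definition vec4 := 'I_4 -> R.
(* a 2-form / bivector, by its antisymmetric coefficients *)
Definition form2 := 'I_4 -> 'I_4 -> R.

Definition delta (i j : 'I_4) : R := (i == j)%:R.

(* algebraic curvature tensor, sign convention Rm(x,y,y,x) = sec(x,y) *)
Definition is_alg_curv (Rm : tensor4) : Prop :=
  [/\ (forall i j k l, Rm i j k l = - Rm j i k l),
      (forall i j k l, Rm i j k l = - Rm i j l k),
      (forall i j k l, Rm i j k l = Rm k l i j) &
      (forall i j k l, Rm i j k l + Rm j k i l + Rm k i j l = 0)].

Definition dot (u v : vec4) : R := \sum_i u i * v i.

Definition tensor_eval (T : tensor4) (x y z w : vec4) : R :=
  \sum_i \sum_j \sum_k \sum_l x i * y j * z k * w l * T i j k l.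

Definition lin_indep2 (u v : vec4) : Prop :=
  forall a b : R, (forall i, a * u i + b * v i = 0) -> a = 0 /\ b = 0.

Definition sec (Rm : tensor4) (u v : vec4) : R :=
  tensor_eval Rm u v v u / (dot u u * dot v v - (dot u v) ^+ 2).

Definition Ric (Rm : tensor4) (j k : 'I_4) : R := \sum_i Rm i j k i.
Definition scal (Rm : tensor4) : R := \sum_i Ric Rm i i.

Definition KN (h g : 'I_4 -> 'I_4 -> R) : tensor4 :=
  fun x y z w => h y z * g x w + h x w * g y z - h x z * g y w - h y w * g x z.

(* Weyl tensor: Rm = W + 1/2 (Ric - s/4 g) KN g + s/24 g KN g *)
Definition Weyl (Rm : tensor4) : tensor4 :=
  let s := scal Rm in
  let E := fun j k => Ric Rm j k - s / 4%:R * delta j k in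
  fun x y z w => Rm x y z w - 2%:R^-1 * KN E delta x y z w
                 - s / 24%:R * KN delta delta x y z w.

(* bilinear form on 2-forms induced by T: Q(x/\y, z/\w) = T(x,y,w,z);
   the norm is |a|^2 = 1/2 sum a_ij^2, so |e_i /\ e_j| = 1 *)
Definition formQ (T : tensor4) (a b : form2) : R :=
  4%:R^-1 * \sum_i \sum_j \sum_k \sum_l a i j * b k l * T i j l k.

Definition wedge (a b : 'I_4) : form2 :=
  fun i j => ((i == a) && (j == b))%:R - ((i == b) && (j == a))%:R.

Definition i0 : 'I_4 := @Ordinal 4 0 isT.
Definition i1 : 'I_4 := @Ordinal 4 1 isT.
Definition i2 : 'I_4 := @Ordinal 4 2 isT.
Definition i3 : 'I_4 := @Ordinal 4 3 isT.

Definition fadd (a b : form2) : form2 := fun i j => a i j + b i j.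
Definition fsub (a b : form2) : form2 := fun i j => a i j - b i j.

(* sqrt 2 times an orthonormal basis of self-dual (Lambda^+) and
   anti-self-dual (Lambda^-) 2-forms, for the Hodge star of the
   orientation e_0/\e_1/\e_2/\e_3 *)
Definition plus_raw (k : 'I_3) : form2 :=
  match val k with
  | 0 => fadd (wedge i0 i1) (wedge i2 i3)
  | 1 => fsub (wedge i0 i2) (wedge i1 i3)
  | _ => fadd (wedge i0 i3) (wedge i1 i2)
  end.
Definition minus_raw (k : 'I_3) : form2 :=
  match val k with
  | 0 => fsub (wedge i0 i1) (wedge i2 i3)
  | 1 => fadd (wedge i0 i2) (wedge i1 i3)
  | _ => fsub (wedge i0 i3) (wedge i1 i2)
  end.

(* matrices of W^+ : Lambda^+ -> Lambda^+ and W^- in orthonormal bases *)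
Definition Wplus (Rm : tensor4) (k l : 'I_3) : R :=
  2%:R^-1 * formQ (Weyl Rm) (plus_raw k) (plus_raw l).
Definition Wminus (Rm : tensor4) (k l : 'I_3) : R :=
  2%:R^-1 * formQ (Weyl Rm) (minus_raw k) (minus_raw l).

(* |W^+|, |W^-| : norms as endomorphisms of Lambda^+ resp. Lambda^- *)
Definition normWplus (Rm : tensor4) : R :=
  Num.sqrt (\sum_k \sum_l (Wplus Rm k l) ^+ 2).
Definition normWminus (Rm : tensor4) : R :=
  Num.sqrt (\sum_k \sum_l (Wminus Rm k l) ^+ 2).

End Curvature4.

From HB Require Import structures.
From mathcomp Require Import all_boot all_order all_algebra.
From mathcomp Require Import ring lra.
From Stdlib Require Import FunctionalExtensionality.
Set Implicit Arguments. Unset Strict Implicit. Unset Printing Implicit Defensive.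
Import Order.TTheory GRing.Theory Num.Theory.
Local Open Scope ring_scope.

(* Since g is Einstein, Rm = W + (s/24) g KN g, so the sectional curvature of
   the plane of a unit bivector w is <W+ w+, w+> + <W- w-, w-> + s/12, where the
   self-dual and anti-self-dual parts w+ and w- of a unit decomposable bivector
   are exactly the pairs of vectors of norm 1/sqrt 2.  A traceless symmetric
   3x3 matrix A has an eigenvalue <= -|A|/sqrt 6, because its characteristic
   polynomial t^3 - |A|^2 t/2 - det A has three real roots.  Taking w+ and w-
   along such eigenvectors of W+ and W- gives a plane with
   sec <= -(|W+| + |W-|)/(2 sqrt 6) + s/12, so sec >= 0 forces the bound;
   the case sec <= 0 is symmetric. *)

Definition j0 : 'I_3 := @Ordinal 3 0 isT.
Definition j1 : 'I_3 := @Ordinal 3 1 isT.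
Definition j2 : 'I_3 := @Ordinal 3 2 isT.

Lemma det_mx33 (R : comNzRingType) (M : 'M[R]_3) :
  \det M = M j0 j0 * (M j1 j1 * M j2 j2 - M j1 j2 * M j2 j1)
         - M j0 j1 * (M j1 j0 * M j2 j2 - M j1 j2 * M j2 j0)
         + M j0 j2 * (M j1 j0 * M j2 j1 - M j1 j1 * M j2 j0).
Proof.
have -> : M = \matrix_(i, j) M (inord i) (inord j).
  by apply/matrixP => i j; rewrite mxE !inord_val.
rewrite (expand_det_row _ ord0) !big_ord_recr big_ord0 /= /cofactor.
rewrite !(expand_det_row _ ord0) !big_ord_recr !big_ord0 /= /cofactor /= !det_mx11 !mxE /=.
have -> : inord 0 = j0 by apply: val_inj; rewrite /= inordK.
have -> : inord 1 = j1 by apply: val_inj; rewrite /= inordK.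
have -> : inord 2 = j2 by apply: val_inj; rewrite /= inordK.
rewrite !expr0 !expr1 !expr2; ring.
Qed.

Lemma ord3_cases (P : 'I_3 -> Prop) : P j0 -> P j1 -> P j2 -> forall i, P i.
Proof.
by move=> ? ? ? [[|[|[|//]]] i3]; rewrite (bool_irrelevance i3 isT).
Qed.

Lemma sum_ord3 (V : nmodType) (F : 'I_3 -> V) : \sum_(i < 3) F i = F j0 + F j1 + F j2.
Proof.
rewrite !big_ord_recl big_ord0 addr0 addrA.
by congr (F _ + F _ + F _); apply: val_inj.
Qed.

Lemma ord4_cases (P : 'I_4 -> Prop) : P i0 -> P i1 -> P i2 -> P i3 -> forall i, P i.
Proof.
by move=> ? ? ? ? [[|[|[|[|//]]]] i4]; rewrite (bool_irrelevance i4 isT).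
Qed.

Lemma sum_ord4 (V : nmodType) (F : 'I_4 -> V) :
  \sum_(i < 4) F i = F i0 + F i1 + F i2 + F i3.
Proof.
rewrite !big_ord_recl big_ord0 addr0 !addrA.
by congr (F _ + F _ + F _ + F _); apply: val_inj.
Qed.

Section SymmetricMatrices.
Variable R : rcfType.

Definition quad_form n (A : 'I_n -> 'I_n -> R) (w : 'I_n -> R) : R :=
  \sum_i \sum_j A i j * w i * w j.

Lemma quad_formZ n (A : 'I_n -> 'I_n -> R) (c : R) (w : 'I_n -> R) :
  quad_form A (fun i => c * w i) = c ^+ 2 * quad_form A w.
Proof.
rewrite /quad_form mulr_sumr; apply: eq_bigr => i _.
rewrite mulr_sumr; apply: eq_bigr => j _; ring.
Qed.

Lemma sum_sqrZ n (c : R) (w : 'I_n -> R) :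
  \sum_i (c * w i) ^+ 2 = c ^+ 2 * \sum_i w i ^+ 2.
Proof. by rewrite mulr_sumr; apply: eq_bigr => i _; rewrite exprMn. Qed.

Lemma quad_form_eigenvalue n (A : 'I_n -> 'I_n -> R) (l : R) :
  \det (\matrix_(i, j) A i j - l%:M) = 0 ->
  exists w : 'I_n -> R, \sum_i w i ^+ 2 = 1 /\ quad_form A w = l.
Proof.
move/eqP/det0P => [v v0 vA].
have eigen j : \sum_i v 0 i * A i j = l * v 0 j.
  have /matrixP/(_ 0 j) := vA.
  rewrite mulmxBr mul_mx_scalar !mxE => /eqP; rewrite subr_eq0 => /eqP <-.
  by apply: eq_bigr => i _; rewrite mxE.
set n2 := \sum_i v 0 i ^+ 2.
have n2_gt0 : 0 < n2.
  rewrite lt_def sumr_ge0 ?andbT => [|i _]; last exact: sqr_ge0.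
  apply: contra v0 => /eqP /psumr_eq0P v_eq0; apply/eqP/matrixP => i j.
  by rewrite ord1 mxE; apply/eqP; rewrite -sqrf_eq0 v_eq0 // => k _; apply: sqr_ge0.
have quad_v : quad_form A (fun i => v 0 i) = l * n2.
  rewrite /quad_form exchange_big /n2 mulr_sumr; apply: eq_bigr => j _.
  rewrite expr2 mulrA -eigen mulr_suml; apply: eq_bigr => i _; ring.
set c := (Num.sqrt n2)^-1.
have c2 : c ^+ 2 = n2^-1 by rewrite exprVn sqr_sqrtr ?ltW.
exists (fun i => c * v 0 i); split.
  under eq_bigr do rewrite exprMn.
  by rewrite -mulr_sumr c2 mulVf ?gt_eqF.
by rewrite quad_formZ quad_v c2 mulrCA mulVf ?mulr1 ?gt_eqF.
Qed.
Lemma depressed_cubic_root_le (p q : R) : 4%:R * p ^+ 3 + 27%:R * q ^+ 2 <= 0 ->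
  exists t : R, t <= - Num.sqrt (- p / 3%:R) /\ t ^+ 3 + p * t + q = 0.
Proof.
move=> disc.
have p_le0 : p <= 0.
  rewrite leNgt; apply/negP => p_gt0.
  have : 0 < p ^+ 3 by rewrite exprn_gt0.
  have := sqr_ge0 q; lra.
set s := Num.sqrt (- p / 3%:R).
have s_ge0 : 0 <= s := sqrtr_ge0 _.
have s2 : s ^+ 2 = - p / 3%:R by rewrite sqr_sqrtr // divr_ge0 ?ler0n // oppr_ge0.
pose f : {poly R} := 'X^3 + p *: 'X + q%:P.
have fE t : f.[t] = t ^+ 3 + p * t + q by rewrite !hornerE.
have f_s : 0 <= f.[- s].
  have -> : f.[- s] = q - 2%:R / 3%:R * p * s.
    rewrite fE (_ : (- s) ^+ 3 = - (s ^+ 2 * s)); last by ring.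
    by rewrite s2; field.
  set X := - (2%:R / 3%:R * p * s).
  have X_ge0 : 0 <= X by rewrite /X oppr_ge0 -mulrA mulr_ge0_le0 ?divr_ge0 ?ler0n ?mulr_le0_ge0.
  have X2 : X ^+ 2 = - 4%:R / 27%:R * p ^+ 3 by rewrite sqrrN !exprMn s2; field.
  nra.
set K := 1 + `|p| + `|q|.
have p_le : - p <= `|p| by rewrite -normrN ler_norm.
have K_ge1 : 1 <= K by rewrite /K; have := normr_ge0 p; have := normr_ge0 q; lra.
have f_K : f.[- K] <= 0.
  have K2 : K * K <= K ^+ 3 by rewrite exprSr expr2; nra.
  have Kp : - p * K <= `|p| * K by rewrite ler_wpM2r //; lra.
  have Kq : `|q| <= K * `|q| by rewrite ler_peMl ?normr_ge0.
  rewrite fE (_ : (- K) ^+ 3 = - K ^+ 3); last by ring.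
  have KK : K * K = K + `|p| * K + K * `|q| by rewrite {2}/K; ring.
  have := ler_norm q; lra.
have s_le_K : s <= K.
  have pK : - p / 3%:R <= K by rewrite /K; have := normr_ge0 q; lra.
  have : s ^+ 2 <= K ^+ 2 by rewrite s2 expr2; nra.
  by rewrite ler_sqr ?nnegrE //; lra.
have K_le_s : - K <= - s by rewrite lerN2.
have [t /andP[_ t_le] /rootP ft] := poly_ivt K_le_s (introT andP (conj f_K f_s)).
by exists t; rewrite -fE.
Qed.
Definition sym3 (a b c d e f : R) (i j : 'I_3) : R :=
  match val i, val j with
  | 0, 0 => a | 1, 1 => b | 2, 2 => c
  | 0, 1 | 1, 0 => d | 0, 2 | 2, 0 => e | _, _ => f
  end.

Lemma sym3C a b c d e f i j : sym3 a b c d e f i j = sym3 a b c d e f j i.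
Proof. by elim/ord3_cases: i; elim/ord3_cases: j. Qed.

Lemma sym3_eta (A : 'I_3 -> 'I_3 -> R) : (forall i j, A i j = A j i) ->
  A = sym3 (A j0 j0) (A j1 j1) (A j2 j2) (A j0 j1) (A j0 j2) (A j1 j2).
Proof.
move=> symA; apply: functional_extensionality => i; apply: functional_extensionality => j.
by elim/ord3_cases: i; elim/ord3_cases: j; rewrite // symA.
Qed.

Lemma trace_sym3 a b c d e f : \sum_i sym3 a b c d e f i i = a + b + c.
Proof. by rewrite sum_ord3. Qed.

Lemma sum_sym3_sqr a b c d e f :
  \sum_i \sum_j sym3 a b c d e f i j ^+ 2 =
  a ^+ 2 + b ^+ 2 + c ^+ 2 + 2%:R * (d ^+ 2 + e ^+ 2 + f ^+ 2).
Proof. by rewrite !sum_ord3 /sym3 /=; ring. Qed.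

Lemma det_sym3_sub_scalar a b c d e f l :
  \det (\matrix_(i, j) sym3 a b c d e f i j - l%:M) =
  (a - l) * (b - l) * (c - l) + 2%:R * d * e * f
  - (a - l) * f ^+ 2 - (b - l) * e ^+ 2 - (c - l) * d ^+ 2.
Proof. by rewrite det_mx33 !mxE /sym3 /=; ring. Qed.

Lemma frobenius_cauchy_schwarz_sym3 (x1 x2 x3 x4 x5 x6 y1 y2 y3 y4 y5 y6 : R) :
  (x1 * y1 + x2 * y2 + x3 * y3 + 2%:R * (x4 * y4 + x5 * y5 + x6 * y6)) ^+ 2 <=
  (x1 ^+ 2 + x2 ^+ 2 + x3 ^+ 2 + 2%:R * (x4 ^+ 2 + x5 ^+ 2 + x6 ^+ 2)) *
  (y1 ^+ 2 + y2 ^+ 2 + y3 ^+ 2 + 2%:R * (y4 ^+ 2 + y5 ^+ 2 + y6 ^+ 2)).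
Proof.
rewrite -subr_ge0.
set L := (X in 0 <= X).
have -> : L = (x1*y2-x2*y1)^+2 + (x1*y3-x3*y1)^+2 + (x2*y3-x3*y2)^+2
  + 2%:R * ((x1*y4-x4*y1)^+2 + (x1*y5-x5*y1)^+2 + (x1*y6-x6*y1)^+2
     + (x2*y4-x4*y2)^+2 + (x2*y5-x5*y2)^+2 + (x2*y6-x6*y2)^+2
     + (x3*y4-x4*y3)^+2 + (x3*y5-x5*y3)^+2 + (x3*y6-x6*y3)^+2)
  + 4%:R * ((x4*y5-x5*y4)^+2 + (x4*y6-x6*y4)^+2 + (x5*y6-x6*y5)^+2) by rewrite /L; ring.
by repeat first [apply: sqr_ge0 | apply: addr_ge0 | apply: mulr_ge0 | apply: ler0n].
Qed.

(* Cauchy-Schwarz for <A, A^2 - (N/3) I> = 3 det A, where N = |A|^2, together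
   with |A^2 - (N/3) I|^2 = N^2/6, valid for traceless symmetric A. *)
Lemma traceless_sym3_det_bound (a b c d e f : R) : a + b + c = 0 ->
  54%:R * (a * b * c + 2%:R * d * e * f - a * f ^+ 2 - b * e ^+ 2 - c * d ^+ 2) ^+ 2 <=
  (a ^+ 2 + b ^+ 2 + c ^+ 2 + 2%:R * (d ^+ 2 + e ^+ 2 + f ^+ 2)) ^+ 3.
Proof.
move=> abc; have -> : c = - a - b by rewrite -(subr0 c) -abc; ring.
set N := a ^+ 2 + b ^+ 2 + _ + _.
set r := a * b * _ + _ - _ - _ - _.
have := frobenius_cauchy_schwarz_sym3 a b (- a - b) d e f
  (a ^+ 2 + d ^+ 2 + e ^+ 2 - N / 3%:R) (d ^+ 2 + b ^+ 2 + f ^+ 2 - N / 3%:R)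
  (e ^+ 2 + f ^+ 2 + (- a - b) ^+ 2 - N / 3%:R)
  (a * d + d * b + e * f) (a * e + d * f + e * (- a - b)) (d * e + b * f + f * (- a - b)).
set lhs := (X in X <= _); set rhs := (X in _ <= X).
have -> : lhs = 9%:R * r ^+ 2 by rewrite /lhs /r /N; field.
have -> : rhs = N ^+ 3 / 6%:R by rewrite /rhs /N; field.
lra.
Qed.

Lemma traceless_sym3_quad_form_le (A : 'I_3 -> 'I_3 -> R) :
  (forall i j, A i j = A j i) -> \sum_i A i i = 0 ->
  exists w : 'I_3 -> R, \sum_i w i ^+ 2 = 1 /\
    quad_form A w <= - Num.sqrt ((\sum_i \sum_j A i j ^+ 2) / 6%:R).
Proof.
move=> symA; rewrite (sym3_eta symA) trace_sym3 sum_sym3_sqr.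
move: (A j0 j0) (A j1 j1) (A j2 j2) (A j0 j1) (A j0 j2) (A j1 j2) => a b c d e f abc.
move: (traceless_sym3_det_bound d e f abc).
have -> : c = - a - b by rewrite -(subr0 c) -abc; ring.
set N := a ^+ 2 + _ + _ + _; set r := a * b * _ + _ - _ - _ - _ => Nr.
have disc : 4%:R * (- N / 2%:R) ^+ 3 + 27%:R * (- r) ^+ 2 <= 0.
  have -> : 4%:R * (- N / 2%:R) ^+ 3 + 27%:R * (- r) ^+ 2 = (54%:R * r ^+ 2 - N ^+ 3) / 2%:R.
    by field.
  by rewrite pmulr_lle0 ?invr_gt0 ?ltr0n // subr_le0.
have [t [t_le root_t]] := depressed_cubic_root_le disc.
(* the characteristic polynomial of A is t^3 - (N/2) t - det A *)
have [w [w1 qw]] : exists w : 'I_3 -> R,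
    \sum_i w i ^+ 2 = 1 /\ quad_form (sym3 a b (- a - b) d e f) w = t.
  by apply: quad_form_eigenvalue; rewrite det_sym3_sub_scalar -[RHS]oppr0 -root_t /N /r; field.
exists w; split => //; rewrite qw.
by move: t_le; rewrite (_ : - (- N / 2%:R) / 3%:R = N / 6%:R) //; field.
Qed.

Lemma traceless_sym3_signed_quad_form_le (A : 'I_3 -> 'I_3 -> R) (sg : R) :
  `|sg| = 1 -> (forall i j, A i j = A j i) -> \sum_i A i i = 0 ->
  exists w : 'I_3 -> R, \sum_i w i ^+ 2 = 1 /\
    sg * quad_form A w <= - Num.sqrt (\sum_i \sum_j A i j ^+ 2) / Num.sqrt 6%:R.
Proof.
move=> sg1 symA trA.
have sg2 : sg ^+ 2 = 1 by rewrite -real_normK ?num_real // sg1 expr1n.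
have trA' : \sum_i sg * A i i = 0 by rewrite -mulr_sumr trA mulr0.
have [w [w1 hw]] := @traceless_sym3_quad_form_le (fun i j => sg * A i j)
  (fun i j => congr1 _ (symA i j)) trA'.
exists w; split => //; move: hw.
have -> : quad_form (fun i j => sg * A i j) w = sg * quad_form A w.
  by rewrite /quad_form mulr_sumr; apply: eq_bigr => i _; rewrite mulr_sumr;
     apply: eq_bigr => j _; rewrite !mulrA.
have -> : \sum_i \sum_j (sg * A i j) ^+ 2 = \sum_i \sum_j A i j ^+ 2.
  by apply: eq_bigr => i _; apply: eq_bigr => j _; rewrite exprMn sg2 mul1r.
have N_ge0 : 0 <= \sum_i \sum_j A i j ^+ 2.
  by apply: sumr_ge0 => i _; apply: sumr_ge0 => j _; exact: sqr_ge0.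
by rewrite sqrtrM // sqrtrV ?ler0n // mulNr.
Qed.
End SymmetricMatrices.

Section Curvature4.
Variable R : rcfType.

Definition ord_sign (i j : 'I_4) : R :=
  if (i < j)%N then 1 else if (j < i)%N then -1 else 0.

(* The basis bivectors e01, e02, e03, e12, e13, e23 are numbered 0, ..., 5. *)
Definition pair_index (i j : 'I_4) : nat :=
  match minn i j, maxn i j with
  | 0, 1 => 0 | 0, 2 => 1 | 0, 3 => 2 | 1, 2 => 3 | 1, 3 => 4 | _, _ => 5
  end.
Definition pair_fst (a : nat) : 'I_4 := match a with 0 | 1 | 2 => i0 | 3 | 4 => i1 | _ => i2 end.
Definition pair_snd (a : nat) : 'I_4 := match a with 0 => i1 | 1 | 3 => i2 | _ => i3 end.

(* The tensor whose curvature operator has (upper triangular) matrix [x] in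
   the basis of bivectors above. *)
Definition curv_of_coords (x : nat -> nat -> R) : tensor4 R := fun i j k l =>
  let a := pair_index i j in let b := pair_index k l in
  ord_sign i j * ord_sign k l * (if (a <= b)%N then x a b else x b a).

Definition curv_coords (Rm : tensor4 R) (a b : nat) : R :=
  Rm (pair_fst a) (pair_snd a) (pair_fst b) (pair_snd b).

Lemma alg_curv_coordsK (Rm : tensor4 R) :
  is_alg_curv Rm -> curv_of_coords (curv_coords Rm) = Rm.
Proof.
case=> skew_l skew_r swap _.
apply: functional_extensionality => i; apply: functional_extensionality => j.
apply: functional_extensionality => k; apply: functional_extensionality => l.
elim/ord4_cases: i; elim/ord4_cases: j; elim/ord4_cases: k; elim/ord4_cases: l;
rewrite /curv_of_coords /curv_coords /ord_sign /pair_index /=;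
match goal with |- _ = Rm ?i ?j ?k ?l =>
  have := skew_l i j k l; have := skew_r i j k l; have := skew_r j i k l;
  have := swap i j k l; have := swap j i k l; have := swap i j l k; have := swap j i l k end;
lra.
Qed.

Definition plucker (u v : vec4 R) (i j : 'I_4) : R := u i * v j - u j * v i.

(* The coordinates of u /\ v in the bases [plus_raw] and [minus_raw], that is
   sqrt 2 times the coordinates of its self-dual and anti-self-dual parts. *)
Definition bivec_plus (u v : vec4 R) (k : 'I_3) : R :=
  match val k with
  | 0 => plucker u v i0 i1 + plucker u v i2 i3
  | 1 => plucker u v i0 i2 - plucker u v i1 i3
  | _ => plucker u v i0 i3 + plucker u v i1 i2
  end.
Definition bivec_minus (u v : vec4 R) (k : 'I_3) : R :=
  match val k with
  | 0 => plucker u v i0 i1 - plucker u v i2 i3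
  | 1 => plucker u v i0 i2 + plucker u v i1 i3
  | _ => plucker u v i0 i3 - plucker u v i1 i2
  end.

Lemma gram_bivec (u v : vec4 R) :
  dot u u * dot v v - dot u v ^+ 2 =
  (\sum_k bivec_plus u v k ^+ 2 + \sum_k bivec_minus u v k ^+ 2) / 2%:R.
Proof. by rewrite /dot !sum_ord4 !sum_ord3 /bivec_plus /bivec_minus /plucker /=; field. Qed.

Lemma lin_indep2_gram (u v : vec4 R) :
  dot u u * dot v v - dot u v ^+ 2 != 0 -> lin_indep2 u v.
Proof.
move=> gram_neq0 a b dep.
have dot_dep w : a * dot u w + b * dot v w = 0.
  have -> : a * dot u w + b * dot v w = \sum_i (a * u i + b * v i) * w i.
    by rewrite /dot !mulr_sumr -big_split; apply: eq_bigr => i _ /=; ring.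
  by rewrite big1 // => i _; rewrite dep mul0r.
have dotC w w' : dot w w' = dot w' w by apply: eq_bigr => i _; rewrite mulrC.
have a2 : a ^+ 2 * (dot u u * dot v v - dot u v ^+ 2) = 0.
  transitivity (a * dot v v * (a * dot u u + b * dot v u)
                - a * dot u v * (a * dot u v + b * dot v v)); first by rewrite dotC; ring.
  by rewrite !dot_dep; ring.
have b2 : b ^+ 2 * (dot u u * dot v v - dot u v ^+ 2) = 0.
  transitivity (b * dot u u * (a * dot u v + b * dot v v)
                - b * dot u v * (a * dot u u + b * dot v u)); first by rewrite dotC; ring.
  by rewrite !dot_dep; ring.
by move: a2 b2 => /eqP; rewrite mulf_eq0 (negbTE gram_neq0) orbF sqrf_eq0 => /eqP ->
  /eqP; rewrite mulf_eq0 (negbTE gram_neq0) orbF sqrf_eq0 => /eqP ->.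
Qed.

Definition vec4_of (a b c d : R) : vec4 R := fun i =>
  match val i with 0 => a | 1 => b | 2 => c | _ => d end.

Lemma eq_mod_rel (a b r k : R) : r = 0 -> a = b + k * r -> a = b.
Proof. by move=> -> ->; rewrite mulr0 addr0. Qed.

(* The [p]s below are the Pluecker coordinates of the bivector with parts [X]
   and [Y]; its Pluecker relation reads [|X|^2 = |Y|^2], so it is decomposable:
   if [p0k <> 0] it is [u /\ v / p0k] with [v = p(e0, .)] and [u = - p(ek, .)]. *)
Lemma bivec_of_parts (X Y : 'I_3 -> R) :
  \sum_k X k ^+ 2 = \sum_k Y k ^+ 2 -> (exists k, X k + Y k != 0) ->
  exists u v (c : R), [/\ c != 0, bivec_plus u v = (fun k => c * X k)
                              & bivec_minus u v = (fun k => c * Y k)].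
Proof.
rewrite !sum_ord3 => /eqP; rewrite -subr_eq0 => /eqP rel [k XYk].
set p01 := (X j0 + Y j0) / 2%:R; set p23 := (X j0 - Y j0) / 2%:R.
set p02 := (X j1 + Y j1) / 2%:R; set p13 := (Y j1 - X j1) / 2%:R.
set p03 := (X j2 + Y j2) / 2%:R; set p12 := (X j2 - Y j2) / 2%:R.
have half_neq0 (t : R) : t != 0 -> t / 2%:R != 0.
  by move=> t0; rewrite mulf_neq0 ?invr_eq0 ?pnatr_eq0.
elim/ord3_cases: k XYk => XYk;
  [ exists (vec4_of p01 0 (- p12) (- p13)), (vec4_of 0 p01 p02 p03), p01
  | exists (vec4_of p02 p12 0 (- p23)), (vec4_of 0 p01 p02 p03), p02
  | exists (vec4_of p03 p13 p23 0), (vec4_of 0 p01 p02 p03), p03 ];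
(split; first exact: half_neq0);
apply: functional_extensionality => k; elim/ord3_cases: k;
rewrite /bivec_plus /bivec_minus /plucker /vec4_of /= /p01 /p23 /p02 /p13 /p03 /p12;
first [ (field; done)
      | (apply: (eq_mod_rel (k := 1 / 4%:R) rel); field; done)
      | (apply: (eq_mod_rel (k := - 1 / 4%:R) rel); field; done) ].
Qed.

(* The sign [e] is needed when [Y = - X]. *)
Lemma exists_plane_bivec (X Y : 'I_3 -> R) :
  \sum_k X k ^+ 2 = 1 -> \sum_k Y k ^+ 2 = 1 ->
  exists u v (c e : R), [/\ c != 0, e ^+ 2 = 1, bivec_plus u v = (fun k => c * X k)
                          & bivec_minus u v = (fun k => c * e * Y k)].
Proof.
move=> X1 Y1.
have [/existsP XY | ] := boolP [exists k, X k + Y k != 0].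
  have [u [v [c [c0 uvX uvY]]]] := bivec_of_parts (etrans X1 (esym Y1)) XY.
  exists u, v, c, 1; rewrite expr1n uvY; split => //.
  by apply: functional_extensionality => k; rewrite mulr1.
rewrite negb_exists => /forallP XY.
have [k Xk] : exists k, X k != 0.
  apply/existsP; apply: contraT; rewrite negb_exists => /forallP X0.
  move: X1; rewrite big1 => [/eqP|i _]; first by rewrite eq_sym oner_eq0.
  by move/negPn/eqP: (X0 i) ->; rewrite expr0n.
have YE i : - Y i = X i by apply/eqP; rewrite eq_sym -subr_eq0 opprK; exact/negPn.
have XY' : exists k, X k + - Y k != 0.
  by exists k; rewrite YE -mulr2n mulrn_eq0.
have XY2 : \sum_i X i ^+ 2 = \sum_i (- Y i) ^+ 2.
  by apply: eq_bigr => i _; rewrite YE.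
have [u [v [c [c0 uvX uvY]]]] := bivec_of_parts XY2 XY'.
exists u, v, c, (-1); rewrite sqrrN expr1n uvY; split => //.
by apply: functional_extensionality => i; rewrite mulrN1 mulrN mulNr.
Qed.

Lemma alg_curv_coords_bianchi (Rm : tensor4 R) : is_alg_curv Rm ->
  curv_coords Rm 2 3 = curv_coords Rm 1 4 - curv_coords Rm 0 5.
Proof.
case=> skew_l _ swap bianchi; rewrite /curv_coords /=.
have := bianchi i0 i1 i2 i3; have := swap i1 i2 i0 i3; have := skew_l i2 i0 i1 i3; lra.
Qed.

Ltac ricci_entries ric :=
  have := ric i0 i0; have := ric i1 i1; have := ric i2 i2; have := ric i3 i3;
  have := ric i0 i1; have := ric i0 i2; have := ric i0 i3;
  have := ric i1 i2; have := ric i1 i3; have := ric i2 i3;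
  rewrite /Ric !sum_ord4 /curv_of_coords /ord_sign /pair_index /delta /=.

Lemma einstein_coords_diag (x : nat -> nat -> R) (lam : R) :
  (forall i j, Ric (curv_of_coords x) i j = lam * delta R i j) ->
  [/\ lam = - (x 0 0 + x 1 1 + x 2 2), x 5 5 = x 0 0, x 4 4 = x 1 1 & x 3 3 = x 2 2].
Proof. by move=> ric; ricci_entries ric; move=> *; split; lra. Qed.

Lemma einstein_coords_offdiag (x : nat -> nat -> R) (lam : R) :
  (forall i j, Ric (curv_of_coords x) i j = lam * delta R i j) ->
  [/\ x 2 4 = - x 1 3, x 2 5 = x 0 3 & x 1 5 = - x 0 4] /\
  [/\ x 4 5 = - x 0 1, x 3 5 = x 0 2 & x 3 4 = - x 1 2].
Proof. by move=> ric; ricci_entries ric; move=> *; do 2!split; lra. Qed.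

Lemma weyl_einstein (Rm : tensor4 R) (lam : R) :
  (forall i j, Ric Rm i j = lam * delta R i j) ->
  Weyl Rm = fun i j k l => Rm i j k l - lam / 6%:R * KN (delta R) (delta R) i j k l.
Proof.
move=> ric; have scalE : scal Rm = 4%:R * lam by rewrite /scal sum_ord4 !ric /delta /=; ring.
apply: functional_extensionality => i; apply: functional_extensionality => j.
apply: functional_extensionality => k; apply: functional_extensionality => l.
by rewrite /Weyl scalE /KN !ric; field.
Qed.

Lemma sum_wedge (G : 'I_4 -> 'I_4 -> R) a b :
  \sum_i \sum_j wedge R a b i j * G i j = G a b - G b a.
Proof. by elim/ord4_cases: a; elim/ord4_cases: b; rewrite !sum_ord4 /wedge /=; ring. Qed.

Lemma sum_fadd_wedge (G : 'I_4 -> 'I_4 -> R) a b c d :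
  \sum_i \sum_j fadd (wedge R a b) (wedge R c d) i j * G i j =
  (G a b - G b a) + (G c d - G d c).
Proof.
rewrite -!sum_wedge -big_split; apply: eq_bigr => i _; rewrite -big_split.
by apply: eq_bigr => j _; rewrite /fadd mulrDl.
Qed.

Lemma sum_fsub_wedge (G : 'I_4 -> 'I_4 -> R) a b c d :
  \sum_i \sum_j fsub (wedge R a b) (wedge R c d) i j * G i j =
  (G a b - G b a) - (G c d - G d c).
Proof.
rewrite -!sum_wedge -sumrB; apply: eq_bigr => i _; rewrite -sumrB.
by apply: eq_bigr => j _; rewrite /fsub mulrBl.
Qed.

Lemma formQ_iterated (T : tensor4 R) a b :
  formQ T a b = 4%:R^-1 * \sum_i \sum_j a i j * (\sum_k \sum_l b k l * T i j l k).
Proof.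
rewrite /formQ; congr (_ * _); apply: eq_bigr => i _; apply: eq_bigr => j _.
rewrite big_distrr; apply: eq_bigr => k _; rewrite big_distrr; apply: eq_bigr => l _.
by rewrite /= mulrA.
Qed.

Definition wplus_coords (x : nat -> nat -> R) : 'I_3 -> 'I_3 -> R :=
  sym3 ((x 1 1 + x 2 2 - 2%:R * x 0 0) / 3%:R - x 0 5)
       ((x 0 0 + x 2 2 - 2%:R * x 1 1) / 3%:R + x 1 4)
       ((x 0 0 + x 1 1 - 2%:R * x 2 2) / 3%:R - x 1 4 + x 0 5)
       (- x 0 1 + x 0 4) (- x 0 2 - x 0 3) (- x 1 2 - x 1 3).
Definition wminus_coords (x : nat -> nat -> R) : 'I_3 -> 'I_3 -> R :=
  sym3 ((x 1 1 + x 2 2 - 2%:R * x 0 0) / 3%:R + x 0 5)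
       ((x 0 0 + x 2 2 - 2%:R * x 1 1) / 3%:R - x 1 4)
       ((x 0 0 + x 1 1 - 2%:R * x 2 2) / 3%:R + x 1 4 - x 0 5)
       (- x 0 1 - x 0 4) (- x 0 2 + x 0 3) (- x 1 2 + x 1 3).

Section EinsteinCoords.
Variables (x : nat -> nat -> R) (lam : R).
Hypothesis ric : forall i j, Ric (curv_of_coords x) i j = lam * delta R i j.
Hypothesis bianchi : x 2 3 = x 1 4 - x 0 5.

Lemma Weyl_einstein_coords :
  Wplus (curv_of_coords x) = wplus_coords x /\ Wminus (curv_of_coords x) = wminus_coords x.
Proof.
case: (einstein_coords_diag ric) => lamE x55 x44 x33.
case: (einstein_coords_offdiag ric) => -[x24 x25 x15] [x45 x35 x34].
by split; apply: functional_extensionality => k; apply: functional_extensionality => l;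
elim/ord3_cases: k; elim/ord3_cases: l;
rewrite /Wplus /Wminus formQ_iterated /plus_raw /minus_raw /=;
rewrite ?sum_fadd_wedge ?sum_fsub_wedge; rewrite ?sum_fadd_wedge ?sum_fsub_wedge;
rewrite (weyl_einstein ric) /curv_of_coords /ord_sign /pair_index /KN /delta;
rewrite /wplus_coords /wminus_coords /sym3 /=;
rewrite ?x55 ?x44 ?x33 ?x24 ?x25 ?x15 ?x45 ?x35 ?x34 ?bianchi ?lamE; field.
Qed.

Lemma Wplus_einstein_sym i j :
  Wplus (curv_of_coords x) i j = Wplus (curv_of_coords x) j i.
Proof. by have [-> _] := Weyl_einstein_coords; exact: sym3C. Qed.

Lemma Wminus_einstein_sym i j :
  Wminus (curv_of_coords x) i j = Wminus (curv_of_coords x) j i.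
Proof. by have [_ ->] := Weyl_einstein_coords; exact: sym3C. Qed.

Lemma Wplus_einstein_trace : \sum_i Wplus (curv_of_coords x) i i = 0.
Proof.
by have [-> _] := Weyl_einstein_coords; rewrite trace_sym3; field.
Qed.

Lemma Wminus_einstein_trace : \sum_i Wminus (curv_of_coords x) i i = 0.
Proof.
by have [_ ->] := Weyl_einstein_coords; rewrite trace_sym3; field.
Qed.

Lemma curvature_bivec (u v : vec4 R) :
  tensor_eval (curv_of_coords x) u v v u =
  (quad_form (Wplus (curv_of_coords x)) (bivec_plus u v)
   + quad_form (Wminus (curv_of_coords x)) (bivec_minus u v)) / 2%:R
  + lam / 3%:R * (dot u u * dot v v - dot u v ^+ 2).
Proof.
have [-> ->] := Weyl_einstein_coords.
case: (einstein_coords_diag ric) => lamE x55 x44 x33.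
case: (einstein_coords_offdiag ric) => -[x24 x25 x15] [x45 x35 x34].
rewrite gram_bivec /quad_form !sum_ord3 /tensor_eval !sum_ord4.
rewrite /curv_of_coords /ord_sign /pair_index /wplus_coords /wminus_coords /sym3.
rewrite /bivec_plus /bivec_minus /plucker /=.
by rewrite x55 x44 x33 x24 x25 x15 x45 x35 x34 bianchi lamE; field.
Qed.
(* [sg = 1] and [sg = -1] cover the two signs of the sectional curvature. *)
Variable sg : R.
Hypothesis sg1 : `|sg| = 1.
Hypothesis sec_sign : forall u v, lin_indep2 u v -> 0 <= sg * sec (curv_of_coords x) u v.

Lemma einstein_weyl_bound :
  normWplus (curv_of_coords x) + normWminus (curv_of_coords x) <=
  `|scal (curv_of_coords x)| / Num.sqrt 6%:R.
Proof.
have [w1 [w1_unit hw1]] := traceless_sym3_signed_quad_form_le sg1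
  Wplus_einstein_sym Wplus_einstein_trace.
have [w2 [w2_unit hw2]] := traceless_sym3_signed_quad_form_le sg1
  Wminus_einstein_sym Wminus_einstein_trace.
set Rm := curv_of_coords x in hw1 hw2 *.
have [u [v [c [e [c0 e2 uv_plus uv_minus]]]]] := exists_plane_bivec w1_unit w2_unit.
have gramE : dot u u * dot v v - dot u v ^+ 2 = c ^+ 2.
  by rewrite gram_bivec uv_plus uv_minus !sum_sqrZ w1_unit w2_unit exprMn e2; field.
have c2_neq0 : c ^+ 2 != 0 by rewrite sqrf_eq0.
have secE : sec Rm u v = (quad_form (Wplus Rm) w1 + quad_form (Wminus Rm) w2) / 2%:R + lam / 3%:R.
  rewrite /sec curvature_bivec gramE uv_plus uv_minus !quad_formZ exprMn e2.
  by field.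
have uv_indep : lin_indep2 u v by apply: lin_indep2_gram; rewrite gramE.
have := sec_sign uv_indep; rewrite secE => sec_ge0.
have scalE : scal Rm = 4%:R * lam by rewrite /scal sum_ord4 !ric /delta /=; ring.
set w := Num.sqrt 6%:R in hw1 hw2 *.
have w_gt0 : 0 < w by rewrite sqrtr_gt0 ltr0n.
have w_sq : w ^+ 2 = 6%:R by rewrite sqr_sqrtr ?ler0n.
rewrite -/(normWplus Rm) -/(normWminus Rm) in hw1 hw2.
have sg_lam : sg * lam <= `|lam| by rewrite -[`|lam|]mul1r -sg1 -normrM ler_norm.
have bound : (normWplus Rm + normWminus Rm) / w <= 2%:R / 3%:R * `|lam|.
  by rewrite mulrDl; lra.
rewrite ler_pdivrMr // in bound.
rewrite scalE normrM ger0_norm ?ler0n //.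
have -> : 4%:R * `|lam| / w = 2%:R / 3%:R * `|lam| * w.
  apply: (mulIf (lt0r_neq0 w_gt0)); rewrite mulfVK ?lt0r_neq0 //.
  rewrite (_ : _ * w * w = 2%:R / 3%:R * `|lam| * w ^+ 2); last by ring.
  by rewrite w_sq; field.
exact: bound.
Qed.
End EinsteinCoords.
End Curvature4.

Theorem proposition2p2 (R : rcfType) (M : Type) (Rm : M -> tensor4 R)
  (Hcurv : forall p, is_alg_curv (Rm p))
  (Heinstein : exists lam : R, forall p i j, Ric (Rm p) i j = lam * delta R i j)
  (Hsec : (forall p u v, lin_indep2 u v -> 0 <= sec (Rm p) u v) \/
          (forall p u v, lin_indep2 u v -> sec (Rm p) u v <= 0)) :
  forall p : M,
    normWplus (Rm p) + normWminus (Rm p) <= `|scal (Rm p)| / Num.sqrt 6%:R.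
Proof.
move=> p; have [lam ric] := Heinstein.
have coordsK := alg_curv_coordsK (Hcurv p).
have ric_p i j : Ric (curv_of_coords (curv_coords (Rm p))) i j = lam * delta R i j.
  by rewrite coordsK.
have bianchi := alg_curv_coords_bianchi (Hcurv p).
rewrite -coordsK.
case: Hsec => sec_sign.
- apply: (einstein_weyl_bound (sg := 1) ric_p bianchi); first by rewrite normr1.
  by move=> u v uv; rewrite mul1r coordsK; apply: sec_sign.
- apply: (einstein_weyl_bound (sg := -1) ric_p bianchi); first by rewrite normrN normr1.
  by move=> u v uv; rewrite mulN1r oppr_ge0 coordsK; apply: sec_sign.
Qed.
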